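(* Let $K\subseteq L$ be real closed fields, and $C$ a positive Dedekind cut in $L$ which is not additive. Let $C'$ and $C'_{\mathrm{add}}$ be the cuts induced on $K$ by $C$ and $C_{\mathrm{add}}$ respectively, i.e. $C'=(C^-\cap K,C^+\cap K)$ and $C'_{\mathrm{add}}=((C_{\mathrm{add}})^-\cap K,(C_{\mathrm{add}})^+\cap K)$. Suppose that $C'_{\mathrm{add}}=(C')_{\mathrm{add}}$, and that $x,y\in L$ are two realizations of the cut $C'$ of $K$, with $x\in C^-$ and $y\in C^+$. Then $y-x$ induces the cut $C'_{\mathrm{add}}$ on $K$; that is, $(C'_{\mathrm{add}})^-=\{a\in K:a<y-x\}$ and $(C'_{\mathrm{add}})^+=\{a\in K: a\ge y-x\}$.
   Context: A cut of an ordered field $F$ is a pair $C=(C^-,C^+)$ with $F=C^-\cup C^+$ disjoint and $C^-<C^+$. It is a Dedekind cut if both sides are nonempty, $C^-$ has no maximum and $C^+$ has no minimum. It is positive if $C^-$ contains a positive element. It is additive if $C^-$ is closed under addition and contains some positive element. For a cut $C$ of $F$, $C_{\mathrm{add}}$ is the cut of $F$ with left side $\{r\in F: r+C^-\subseteq C^-\}$ (right side the complement). An element $a$ of an extension field realizes a cut $D$ of $K$ if $D^-=\{c\in K:c<a\}$ and $D^+=\{c\in K:c>a\}$. *)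

From HB Require Import structures.
From mathcomp Require Import all_boot all_order all_algebra.
Set Implicit Arguments. Unset Strict Implicit. Unset Printing Implicit Defensive.
Import Order.TTheory GRing.Theory Num.Theory.
Local Open Scope ring_scope.

(* A cut C = (C^-, C^+) of an ordered field F is represented by its left
   side C^- : F -> Prop; the right side C^+ is the complement. *)
Definition is_cut (F : realFieldType) (Cm : F -> Prop) : Prop :=
  forall x y, Cm x -> ~ Cm y -> x < y.

Definition dedekind_cut (F : realFieldType) (Cm : F -> Prop) : Prop :=
  [/\ is_cut Cm, (exists x, Cm x), (exists y, ~ Cm y),
      (forall x, Cm x -> exists x', Cm x' /\ x < x') &
      (forall y, ~ Cm y -> exists y', ~ Cm y' /\ y' < y)].

Definition positive_cut (F : realFieldType) (Cm : F -> Prop) : Prop :=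
  exists x, Cm x /\ 0 < x.

Definition additive_cut (F : realFieldType) (Cm : F -> Prop) : Prop :=
  (forall x y, Cm x -> Cm y -> Cm (x + y)) /\ (exists x, Cm x /\ 0 < x).

Definition cut_add (F : realFieldType) (Cm : F -> Prop) : F -> Prop :=
  fun r => forall c, Cm c -> Cm (r + c).

Definition induced_cut (K L : realFieldType) (f : K -> L) (Cm : L -> Prop)
  : K -> Prop := fun a => Cm (f a).

Definition realizes (K L : realFieldType) (f : K -> L) (Dm : K -> Prop) (a : L)
  : Prop := forall c, (Dm c <-> f c < a) /\ (~ Dm c <-> a < f c).

(* If [f a < y - x], then every [c] of [K] below [x] satisfies [a + c < y],
   so [a] lies in [(C')_add], which by hypothesis is [C'_add].  Conversely,
   if [f a] lies in [C_add], it moves [x] in [C^-] to [f a + x] in [C^-],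
   hence below [y]. *)
From HB Require Import structures.
From mathcomp Require Import all_boot all_order all_algebra.
Import Order.TTheory GRing.Theory Num.Theory.
Local Open Scope ring_scope.

Lemma cut_add_lt (F : realFieldType) (C : F -> Prop) (r x y : F) :
  is_cut C -> cut_add C r -> C x -> ~ C y -> r < y - x.
Proof. by move=> cutC Cr Cx nCy; rewrite ltrBrDr; apply: cutC (Cr _ Cx) nCy. Qed.

Lemma realizes_cut_add (K L : realFieldType) (f : {rmorphism K -> L})
    (D : K -> Prop) (x y : L) (a : K) :
  realizes f D x -> realizes f D y -> f a < y - x -> cut_add D a.
Proof.
move=> rx ry lt_a c Dc.
have lt_cx : f c < x by apply/(rx c).1.
apply/(ry (a + c)).1; rewrite rmorphD -ltrBrDr.
by apply: (lt_trans lt_a); rewrite ltrD2l ltrN2.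
Qed.

Lemma iff_not_lt (R : realDomainType) (P : Prop) (u v : R) :
  (P <-> u < v) -> (~ P <-> v <= u).
Proof.
move=> [Plt ltP]; split; first by rewrite leNgt => nP; apply/negP => /ltP.
by move=> le_vu /Plt; rewrite ltNge le_vu.
Qed.

Theorem lemma2p11 (K L : rcfType) (f : {rmorphism K -> L}) (C : L -> Prop) :
  dedekind_cut C -> positive_cut C -> ~ additive_cut C ->
  (forall a : K, induced_cut f (cut_add C) a <-> cut_add (induced_cut f C) a) ->
  forall x y : L,
    realizes f (induced_cut f C) x -> realizes f (induced_cut f C) y ->
    C x -> ~ C y ->
    forall a : K,
      (induced_cut f (cut_add C) a <-> f a < y - x) /\
      (~ induced_cut f (cut_add C) a <-> y - x <= f a).
Proof.
move=> [cutC _ _ _ _] _ _ addK x y rx ry Cx nCy a.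
have addP : induced_cut f (cut_add C) a <-> f a < y - x.
  split=> [Ca | lt_a]; first exact: cut_add_lt cutC Ca Cx nCy.
  by apply/addK; apply: realizes_cut_add rx ry lt_a.
by split=> //; apply: iff_not_lt.
Qed.
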